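(* Let $r\ge0$ and let $A$ be a finitely generated $E_r$-cofibrant dga over a field $\mathbf{k}$ of characteristic $0$. The following are equivalent: (1) $A$ admits an $r$-splitting; (2) the morphism $E_r:\mathrm{Aut}_W(A)\to\mathrm{Aut}(E_r(A))$ is surjective; (3) there exist $\alpha\in\mathbf{k}^*$, not a root of unity, and $\Phi\in\mathrm{Aut}_W(A)$ such that $E_r(\Phi)=\varphi_\alpha$, the $r$-bigrading automorphism of $E_r(A)$ associated with $\alpha$.
   Context: Filtered dga's: a filtered dga over $\mathbf{k}$ is a non-negatively graded commutative dga $A$ (differential of degree $+1$) with an increasing multiplicative regular exhaustive filtration $W$ by subcomplexes, with filtered unit ($\mathbf{k}$ trivially filtered). $E_r(A)$ is the spectral sequence of $(A,W)$ with $E_0^{-p,n+p}(A)=Gr^W_pA^n$, a bigraded dga. $\mathrm{Aut}_W(A)$ is the group of filtered dga automorphisms of $A$; $\mathrm{Aut}(E_r(A))$ is the group of bigraded dga automorphisms of $E_r(A)$ (commuting with $d_r$); $E_r:\mathrm{Aut}_W(A)\to\mathrm{Aut}(E_r(A))$ is the induced map. For $\alpha\in\mathbf{k}^*$, the $r$-bigrading automorphism $\varphi_\alpha$ of $E_r(A)$ is $\varphi_\alpha(a)=\alpha^{nr+p}a$ for $a\in E_r^{-p,n+p}(A)$. $E_r$-cofibrant dga's: given a filtered dga $A$, an $E_r$-cofibrant extension of degree $n$ and weight $p$ is $A\otimes_\xi\Lambda V$ where $V$ is a vector space concentrated in degree $n$ and pure weight $p$ and $\xi:V\to W_{p-r}A^{n+1}$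 is linear with $d\circ\xi=0$; differential $dv=\xi(v)$ and filtration extended multiplicatively. An $E_r$-cofibrant dga is the colimit of a sequence of such extensions starting from $\mathbf{k}$; finitely generated means obtained by finitely many extensions with finite-dimensional $V$. $r$-splitting: a direct sum decomposition $A=\bigoplus_{p,q}A^{p,q}$ into subspaces such that $d(A^{p,q})\subset A^{p+r,q-r+1}$, $A^{p,q}\cdot A^{p',q'}\subset A^{p+p',q+q'}$ and $W_mA^n=\bigoplus_{p\le m}A^{-p,n+p}$. *)

From HB Require Import structures.
From mathcomp Require Import all_boot all_order all_algebra.
Set Implicit Arguments. Unset Strict Implicit. Unset Printing Implicit Defensive.
Import Order.TTheory GRing.Theory Num.Theory.
Local Open Scope ring_scope.

(* Data of a finitely generated candidate E_r-cofibrant dga: an algebra A over k,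
   finitely many generators v_0 < ... < v_{N-1} (in the order of the extensions),
   with their degrees and weights, and a differential d. *)
Record cdga_data (k : fieldType) (A : algType k) := CDGAData {
  ngen : nat;
  gen : 'I_ngen -> A;
  gdeg : 'I_ngen -> nat;
  gwt : 'I_ngen -> int;
  dif : A -> A }.

Arguments ngen {k A} c.
Arguments gen {k A} c _.
Arguments gdeg {k A} c _.
Arguments gwt {k A} c _.
Arguments dif {k A} c _.

Section Defs.
Variables (k : fieldType) (A : algType k) (D : cdga_data A).
Local Notation N := (ngen D).
Local Notation v := (gen D).
Local Notation d := (dif D).

Definition expo := {ffun 'I_N -> nat}.
Definition mono (e : expo) : A := \prod_(i < N) v i ^+ e i.
Definition adm (e : expo) : bool := [forall i, odd (gdeg D i) ==> (e i <= 1)%N].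
Definition mdeg (e : expo) : int := ((\sum_(i < N) e i * gdeg D i)%N)%:Z.
Definition mwt (e : expo) : int := \sum_(i < N) (e i)%:Z * gwt D i.

Definition inspan (P : pred expo) (a : A) : Prop :=
  exists (s : seq expo) (c : expo -> k), all P s /\ a = \sum_(e <- s) c e *: mono e.

(* A^n (n : int; A^n = 0 for n < 0) *)
Definition hom (n : int) : A -> Prop := inspan (fun e => adm e && (mdeg e == n)).
(* W_m A^n, the multiplicative extension of the weights of the generators *)
Definition Wf (m n : int) : A -> Prop :=
  inspan (fun e => [&& adm e, mdeg e == n & mwt e <= m]).

Definition free_gc : Prop :=
  [/\ forall i j, v i * v j = ((-1) ^+ (gdeg D i * gdeg D j)) *: (v j * v i),
      forall (s : seq expo) (c : expo -> k), uniq s -> all adm s ->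
        \sum_(e <- s) c e *: mono e = 0 -> forall e, e \in s -> c e = 0 &
      forall a, inspan adm a].

(* d is a k-linear derivation of degree +1 with d^2 = 0, and
   d v_i lies in W_{p_i - r} of the subalgebra generated by v_0..v_{i-1},
   in degree n_i + 1 (E_r-cofibrant extensions). *)
Definition diff_cof (r : nat) : Prop :=
  [/\ forall (c : k) (a b : A), d (c *: a + b) = c *: d a + d b,
      forall (n : nat) (a b : A), hom n%:Z a -> d (a * b) = d a * b + (-1) ^+ n *: (a * d b),
      forall a, d (d a) = 0 &
      forall i : 'I_N, inspan (fun e => [&& adm e, [forall j : 'I_N, (i <= j)%N ==> (e j == 0%N)],
                                        mdeg e == ((gdeg D i).+1)%:Z & mwt e <= gwt D i - r%:Z])
                             (d (v i))].

Definition regularW : Prop := forall n : int, exists q : int, forall a, Wf q n a -> a = 0.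

Definition fg_Er_cofibrant (r : nat) : Prop := free_gc /\ diff_cof r /\ regularW.

(* Spectral sequence: E_r^{-p,n+p} = Z_r^{p,n} / B_r^{p,n}, with
   Z_s^{p,n} = W_p A^n ∩ d^{-1}(W_{p-s} A^{n+1}) and
   B_r^{p,n} = Z_{r-1}^{p-1,n} + d Z_{r-1}^{p+r-1,n-1}. *)
Definition Zr (s p n : int) (a : A) : Prop := Wf p n a /\ Wf (p - s) (n + 1) (d a).
Definition Br (r : nat) (p n : int) (a : A) : Prop :=
  exists z1 z2, Zr (r%:Z - 1) (p - 1) n z1 /\ Zr (r%:Z - 1) (p + r%:Z - 1) (n - 1) z2
                /\ a = z1 + d z2.

Definition WAut (Phi : A -> A) : Prop :=
  [/\ (forall (c : k) a b, Phi (c *: a + b) = c *: Phi a + Phi b),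
      (forall a b, Phi (a * b) = Phi a * Phi b) /\ Phi 1 = 1,
      (forall a, Phi (d a) = d (Phi a)),
      bijective Phi &
      (forall m n a, Wf m n (Phi a) <-> Wf m n a)].

(* Aut(E_r(A)): a bigraded dga automorphism of E_r(A), presented by a family of
   lifts G p n : Z_r^{p,n} -> Z_r^{p,n}, well defined, linear, bijective modulo
   B_r^{p,n}, multiplicative, unital, and commuting with d_r. *)
Definition EAut (r : nat) (G : int -> int -> A -> A) : Prop :=
  [/\ (forall p n x, Zr r%:Z p n x -> Zr r%:Z p n (G p n x)),
      (forall p n (c : k) x y, Zr r%:Z p n x -> Zr r%:Z p n y ->
          Br r p n (G p n (c *: x + y) - (c *: G p n x + G p n y))),
      (forall p n x, Br r p n x -> Br r p n (G p n x)),
      (forall p n x, Zr r%:Z p n x -> Br r p n (G p n x) -> Br r p n x) &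
      [/\ (forall p n y, Zr r%:Z p n y -> exists x, Zr r%:Z p n x /\ Br r p n (G p n x - y)),
          (forall p n p' n' x y, Zr r%:Z p n x -> Zr r%:Z p' n' y ->
              Br r (p + p') (n + n') (G (p + p') (n + n') (x * y) - G p n x * G p' n' y)),
          Br r 0 0 (G 0 0 1 - 1) &
          (forall p n x, Zr r%:Z p n x ->
              Br r (p - r%:Z) (n + 1) (G (p - r%:Z) (n + 1) (d x) - d (G p n x)))]].

Definition induces (r : nat) (Phi : A -> A) (G : int -> int -> A -> A) : Prop :=
  forall p n x, Zr r%:Z p n x -> Br r p n (Phi x - G p n x).

Definition Er_surjective (r : nat) : Prop :=
  forall G, EAut r G -> exists Phi, WAut Phi /\ induces r Phi G.

(* the r-bigrading automorphism: alpha^{nr+p} on E_r^{-p,n+p} *)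
Definition bigrading (r : nat) (alpha : k) : int -> int -> A -> A :=
  fun p n x => alpha ^ (n * r%:Z + p) *: x.

Definition bigrading_lift (r : nat) : Prop :=
  exists alpha : k, [/\ alpha != 0, (forall m : nat, (0 < m)%N -> alpha ^+ m != 1) &
    exists Phi, WAut Phi /\ induces r Phi (bigrading r alpha)].

Definition r_splitting (r : nat) : Prop :=
  exists S : int -> int -> A -> Prop,
  [/\ (forall p q, S p q 0 /\ forall (c : k) x y, S p q x -> S p q y -> S p q (c *: x + y)),
      (forall a, exists (s : seq (int * int)) (x : int * int -> A),
          (forall i, i \in s -> S i.1 i.2 (x i)) /\ a = \sum_(i <- s) x i),
      (forall (s : seq (int * int)) (x : int * int -> A), uniq s ->
          (forall i, i \in s -> S i.1 i.2 (x i)) -> \sum_(i <- s) x i = 0 ->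
          forall i, i \in s -> x i = 0),
      (forall p q x, S p q x -> S (p + r%:Z) (q - r%:Z + 1) (d x)) &
      [/\ (forall p q p' q' x y, S p q x -> S p' q' y -> S (p + p') (q + q') (x * y)) &
          (forall m n a, Wf m n a <-> exists (s : seq int) (x : int -> A),
              (forall p, p \in s -> p <= m /\ S (- p) (n + p) (x p)) /\ a = \sum_(p <- s) x p)]].

End Defs.

(* Since the generators are adjoined in E_r-cofibrant extensions, d maps W_p A^n to
   W_{p-r} A^{n+1} (d_Wf); consequently every element of W_p A^n is an r-cycle and
   the r-boundaries B_r^{p,n} are exactly W_{p-1} A^n (Br_Wf, Wf_Br), so classes in
   E_r are elements of W_p A^n modulo W_{p-1} A^n.
   - (1) => (2): given a splitting A = (+) A^{p,q}, an automorphism [G] of E_r(A)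
     is realised by PhiG, which sends each x in A^{p,q} to the A^{p,q}-component of
     G x; it is a filtered dga automorphism because the pieces of weight p
     represent Gr^W_p faithfully (splitting_surjective).
   - (2) => (3): phi_2 is an automorphism of E_r(A), and 2 is not a root of unity
     in characteristic 0 (surjective_bigrading_lift).
   - (3) => (1): if Phi lifts phi_al, every element of W_m A^n is a sum of
     eigenvectors of Phi (induction down the regular filtration), and the
     eigenspaces, indexed by weight and degree, form an r-splitting
     (eigenpiece_splitting). *)

From Pilot Require Import Defs.
From HB Require Import structures.
From mathcomp Require Import all_boot all_order all_algebra.
From Stdlib Require Import ClassicalEpsilon.
From mathcomp Require Import zify ring.
Set Implicit Arguments. Unset Strict Implicit. Unset Printing Implicit Defensive.
Import Order.TTheory GRing.Theory Num.Theory.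
Local Open Scope ring_scope.

Lemma sum_pred1_seq (V : nmodType) (I : eqType) (u : seq I) (x : I) (F : I -> V) :
  uniq u -> \sum_(i <- u | i == x) F i = if x \in u then F x else 0.
Proof.
elim: u => [|y u IH] /=; first by rewrite big_nil.
case/andP => yu uu; rewrite big_cons in_cons IH //.
by case: (eqVneq y x) => [<- | nyx] //=; rewrite (negbTE yu) addr0.
Qed.

Lemma sum_pred1_notin (V : nmodType) (I : eqType) (u : seq I) (x : I) (F : I -> V) :
  x \notin u -> \sum_(i <- u | i == x) F i = 0.
Proof. by move=> xu; rewrite big1_seq // => i /andP [/eqP -> h]; rewrite h in xu. Qed.

Lemma sum_count (V : nmodType) (I : eqType) (s u : seq I) (F : I -> V) :
  uniq u -> {subset s <= u} ->
  \sum_(i <- s) F i = \sum_(i <- u) F i *+ (count_mem i s).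
Proof.
move=> uu; elim: s => [|x s IH] su.
  by rewrite big_nil big1 // => i _; rewrite mulr0n.
rewrite big_cons IH; last by move=> i hi; apply: su; rewrite in_cons hi orbT.
under [RHS]eq_bigr do rewrite /= mulrnDr eq_sym mulrb.
by rewrite big_split /= -big_mkcond sum_pred1_seq // su // mem_head.
Qed.

Lemma sum_fibres (V : nmodType) (I J : eqType) (s : seq I) (u : seq J) (f : I -> J)
    (x : I -> V) :
  uniq u -> (forall l, l \in s -> f l \in u) ->
  \sum_(j <- u) \sum_(l <- s | f l == j) x l = \sum_(l <- s) x l.
Proof.
move=> uu su; under eq_bigr do rewrite big_mkcond.
rewrite exchange_big /=; apply: eq_big_seq => l ls.
rewrite -big_mkcond /= (eq_bigl (fun j => j == f l)) => [|j]; last exact: eq_sym.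
by rewrite sum_pred1_seq // su.
Qed.

Lemma sum_extend (V : nmodType) (I : eqType) (u w : seq I) (F : I -> V) :
  uniq u -> uniq w -> {subset u <= w} -> (forall i, i \in w -> i \notin u -> F i = 0) ->
  \sum_(i <- u) F i = \sum_(i <- w) F i.
Proof.
move=> uu uw suw hF; rewrite (sum_count _ uw suw); apply: eq_big_seq => i iw.
by rewrite count_uniq_mem //; case: (boolP (i \in u)) => iu //; rewrite hF.
Qed.

Lemma prod_seq0 (R : pzRingType) (I : eqType) (s : seq I) (F : I -> R) i :
  i \in s -> F i = 0 -> \prod_(j <- s) F j = 0.
Proof.
elim: s => [//|j s IH]; rewrite in_cons big_cons => /orP [/eqP <- -> | his hz].
  by rewrite mul0r.
by rewrite IH ?mulr0.
Qed.

Lemma mul_sub_mul (R : pzRingType) (X Y U V : R) : X * Y - U * V = U * (Y - V) + (X - U) * Y.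
Proof. by rewrite mulrBr mulrBl [RHS]addrC [RHS]addrA subrK. Qed.

Lemma prod_seq1 (R : pzRingType) (I : eqType) (s : seq I) (F : I -> R) j :
  uniq s -> j \in s -> (forall i, i != j -> F i = 1) -> \prod_(i <- s) F i = F j.
Proof.
move=> + + F1; elim: s => [//|i s IH] /= /andP [iNs us].
rewrite in_cons big_cons => /orP [/eqP ji | js].
  by subst j; rewrite big1_seq ?mulr1 // => l /andP [_ ls]; apply: F1; apply: contraNneq iNs => <-.
by rewrite F1 ?mul1r ?IH //; apply: contraNneq iNs => ->.
Qed.

Section LinearMaps.
Variables (k : fieldType) (V : lmodType k).

Definition islin (f : V -> V) : Prop := forall (c : k) a b, f (c *: a + b) = c *: f a + f b.

Variables (f : V -> V) (linf : islin f).

Lemma lin0 : f 0 = 0.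
Proof.
have e := linf 1 0 0; rewrite !scale1r addr0 in e.
by apply: (@addrI _ (f 0)); rewrite addr0 -e.
Qed.

Lemma lin_scale c a : f (c *: a) = c *: f a.
Proof. by rewrite -[c *: a]addr0 linf lin0 addr0. Qed.

Lemma lin_add a b : f (a + b) = f a + f b.
Proof. by have := linf 1 a b; rewrite !scale1r. Qed.

Lemma lin_sub a b : f (a - b) = f a - f b.
Proof. by rewrite lin_add -scaleN1r lin_scale scaleN1r. Qed.

Lemma lin_sum (J : Type) (s : seq J) (Q : pred J) (F : J -> V) :
  f (\sum_(j <- s | Q j) F j) = \sum_(j <- s | Q j) f (F j).
Proof.
elim: s => [|x s IH]; first by rewrite !big_nil lin0.
by rewrite !big_cons; case: (Q x) => //; rewrite lin_add IH.
Qed.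

Lemma eigenvectors_indep (J : eqType) (mu : J -> k) (s : seq J) (x : J -> V) :
  uniq s -> {in s &, injective mu} -> (forall i, i \in s -> f (x i) = mu i *: x i) ->
  \sum_(i <- s) x i = 0 -> forall i, i \in s -> x i = 0.
Proof.
elim: s x => [//|j s IH] x /= /andP [js us] hmu hx hs.
have mu_s : {in s &, injective mu}.
  by move=> a b ha hb; apply: hmu; rewrite in_cons ?ha ?hb orbT.
(* applying f - mu j kills x j and rescales the other eigenvectors *)
have hs' : \sum_(i <- s) (mu i - mu j) *: x i = 0.
  have := congr1 (fun v => f v - mu j *: v) hs; rewrite /= lin0 scaler0 subrr.
  rewrite big_cons lin_add lin_sum hx ?mem_head // scalerDr opprD addrACA subrr add0r.
  rewrite scaler_sumr -sumrB => e; apply: etrans e; apply: eq_big_seq => i iins.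
  by rewrite hx ?in_cons ?iins ?orbT // scalerBl.
have xs0 : forall i, i \in s -> x i = 0.
  move=> i iins; have : (mu i - mu j) *: x i = 0.
    apply: (IH (fun i => (mu i - mu j) *: x i) us mu_s) => // l ls.
    by rewrite lin_scale hx ?in_cons ?ls ?orbT // !scalerA mulrC.
  move/eqP; rewrite scaler_eq0 subr_eq0 => /orP [/eqP e|/eqP //].
  have ij := hmu i j; rewrite in_cons iins orbT mem_head in ij.
  by move: js; rewrite -(ij isT isT e) iins.
move=> i; rewrite in_cons => /orP [/eqP -> | /xs0 //].
by move: hs; rewrite big_cons big1_seq ?addr0 // => l /andP [_ /xs0].
Qed.

End LinearMaps.

Section DirectSum.
Variables (k : fieldType) (V : lmodType k) (I : eqType) (Vs : I -> V -> Prop).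

Definition is_decomp (a : V) (s : seq I) (x : I -> V) : Prop :=
  (forall i, i \in s -> Vs i (x i)) /\ a = \sum_(i <- s) x i.

Definition direct_sum : Prop :=
  [/\ (forall i, Vs i 0 /\ forall (c : k) x y, Vs i x -> Vs i y -> Vs i (c *: x + y)),
      (forall a, exists s x, is_decomp a s x) &
      (forall s x, uniq s -> (forall i, i \in s -> Vs i (x i)) -> \sum_(i <- s) x i = 0 ->
         forall i, i \in s -> x i = 0)].

Definition decomp (a : V) : seq I * (I -> V) :=
  epsilon (inhabits ([::], fun _ => 0)) (fun p => is_decomp a p.1 p.2).

Definition proj (i : I) (a : V) : V := \sum_(j <- (decomp a).1 | j == i) (decomp a).2 j.

Hypothesis dsV : direct_sum.

Lemma summand_lin i (c : k) x y : Vs i x -> Vs i y -> Vs i (c *: x + y).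
Proof. by case: dsV => hs _ _; apply: (hs i).2. Qed.

Lemma summand_sum i (J : eqType) (s : seq J) (P : pred J) (F : J -> V) :
  (forall j, j \in s -> P j -> Vs i (F j)) -> Vs i (\sum_(j <- s | P j) F j).
Proof.
move=> hF; rewrite big_seq_cond; apply: big_ind.
- by case: dsV => hs _ _; case: (hs i).
- by move=> x y hx hy; rewrite -[x]scale1r; apply: summand_lin.
- by move=> j /andP [] /hF.
Qed.

Lemma decomp_spec a : is_decomp a (decomp a).1 (decomp a).2.
Proof.
case: dsV => _ hdec _; have [s [x h]] := hdec a.
by apply: (epsilon_spec _ (fun p => is_decomp a p.1 p.2)); exists (s, x).
Qed.

Lemma proj_dec a t y i : is_decomp a t y -> proj i a = \sum_(j <- t | j == i) y j.
Proof.
move=> [hy ea']; have [hx ea] := decomp_spec a.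
set s := (decomp a).1 in hx ea *; set x := (decomp a).2 in hx ea *; rewrite /proj -/s -/x.
pose u := undup (s ++ t).
have uu : uniq u by apply: undup_uniq.
have su : {subset s <= u} by move=> j js; rewrite mem_undup mem_cat js.
have tu : {subset t <= u} by move=> j js; rewrite mem_undup mem_cat js orbT.
pose z j := \sum_(l <- s | l == j) x l - \sum_(l <- t | l == j) y l.
have hz : forall j, j \in u -> Vs j (z j).
  move=> j _; rewrite /z addrC -scaleN1r.
  by apply: summand_lin; apply: summand_sum => l ls /eqP <-; [apply: hy | apply: hx].
have sz : \sum_(j <- u) z j = 0 by rewrite sumrB !sum_fibres // -ea -ea' subrr.
case: dsV => _ _ hind; case iu : (i \in u).
  by apply/eqP; rewrite -subr_eq0; apply/eqP; apply: (hind u z uu hz sz i iu).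
by rewrite !sum_pred1_notin //; apply/negP; [move/tu | move/su]; rewrite iu.
Qed.

Lemma proj_in i a : Vs i (proj i a).
Proof. by apply: summand_sum => j hj /eqP <-; apply: (decomp_spec a).1. Qed.

Lemma proj_sum t y i : uniq t -> (forall j, j \in t -> Vs j (y j)) ->
  proj i (\sum_(j <- t) y j) = if i \in t then y i else 0.
Proof. by move=> ut hy; rewrite (proj_dec i (conj hy erefl)) sum_pred1_seq. Qed.

Lemma proj_self i j x : Vs j x -> proj i x = if i == j then x else 0.
Proof.
move=> hx; have h : is_decomp x [:: j] (fun _ => x).
  by split; [move=> l; rewrite inE => /eqP -> | rewrite big_seq1].
by rewrite (proj_dec i h) big_cons big_nil addr0 eq_sym; case: (i == j).
Qed.

Lemma proj_id i x : Vs i x -> proj i x = x.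
Proof. by move=> hx; rewrite (proj_self i hx) eqxx. Qed.

Lemma proj_supp a s x i : is_decomp a s x -> i \notin s -> proj i a = 0.
Proof. by move=> h his; rewrite (proj_dec i h) sum_pred1_notin. Qed.

Lemma proj_recon a s x u : is_decomp a s x -> uniq u -> {subset s <= u} ->
  a = \sum_(j <- u) proj j a.
Proof.
move=> h uu su; rewrite (eq_bigr _ (fun j _ => proj_dec j h)) sum_fibres //.
by case: h.
Qed.

Definition supp (a : V) : seq I := undup (decomp a).1.

Lemma supp_uniq a : uniq (supp a).
Proof. exact: undup_uniq. Qed.

Lemma recon a : a = \sum_(i <- supp a) proj i a.
Proof. by apply: (proj_recon (decomp_spec a) (supp_uniq a)) => j; rewrite mem_undup. Qed.

Lemma proj_notin_supp a i : i \notin supp a -> proj i a = 0.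
Proof. by rewrite mem_undup; apply: proj_supp (decomp_spec a). Qed.

Lemma proj_lin i : islin (proj i).
Proof.
move=> c a b.
pose u := undup (supp a ++ supp b).
have uu : uniq u by apply: undup_uniq.
have hu (x : V) : {subset supp x <= u} -> x = \sum_(j <- u) proj j x.
  by move=> su; apply: (proj_recon (decomp_spec x) uu) => j hj; apply: su; rewrite mem_undup.
have e : c *: a + b = \sum_(j <- u) (c *: proj j a + proj j b).
  rewrite big_split /= -scaler_sumr -!hu // => j hj; rewrite mem_undup mem_cat hj ?orbT //.
rewrite e proj_sum //; last by move=> j _; apply: summand_lin; apply: proj_in.
case iu : (i \in u) => //.
rewrite !proj_notin_supp ?scaler0 ?addr0 //; apply/negP => hi; move: iu;
  by rewrite mem_undup mem_cat hi ?orbT.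
Qed.

Lemma proj_sub i a b : proj i (a - b) = proj i a - proj i b.
Proof. exact: (lin_sub (proj_lin i) a b). Qed.

Lemma proj0 i : proj i 0 = 0.
Proof. exact: lin0 (proj_lin i). Qed.

Lemma proj_zero a : (forall i, proj i a = 0) -> a = 0.
Proof. by move=> h; rewrite (recon a) big1. Qed.

End DirectSum.

Lemma expfz_inj (k : fieldType) (al : k) (z1 z2 : int) :
  al != 0 -> (forall m : nat, (0 < m)%N -> al ^+ m != 1) -> al ^ z1 = al ^ z2 -> z1 = z2.
Proof.
move=> a0 nr e; have e1 : al ^ (z1 - z2) = 1 by rewrite expfzDr // e -expfzDr // subrr expr0z.
apply/eqP; rewrite -subr_eq0; apply/eqP; move: e1; case: (z1 - z2) => [[|m]|m] //.
  by move=> e2; have := nr m.+1 isT; rewrite exprnP e2 eqxx.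
rewrite NegzE -exprz_inv => e2; have : (al^-1) ^+ m.+1 = 1 by rewrite exprnP.
rewrite exprVn => /eqP; rewrite invr_eq1 => /eqP e3.
by have := nr m.+1 isT; rewrite e3 eqxx.
Qed.

Lemma two_nonroot (k : fieldType) :
  [pchar k] =i pred0 -> (2%:R : k) != 0 /\ (forall m : nat, (0 < m)%N -> (2%:R : k) ^+ m != 1).
Proof.
move/pcharf0P => ch; split; first by rewrite ch.
move=> [//|m] _; apply/negP => /eqP e.
have : ((2 ^ m.+1 - 1)%N%:R : k) == 0 by rewrite natrB ?expn_gt0 // natrX e subrr.
by rewrite ch expnS; have := expn_gt0 2 m; lia.
Qed.

Section ScalarCommutation.
Variables (k : fieldType) (A : algType k).

Definition scomm (x y : A) : Prop := exists c : k, x * y = c *: (y * x).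

Lemma scomm1 x : scomm x 1.
Proof. by exists 1; rewrite mulr1 mul1r scale1r. Qed.

Lemma scomm1l x : scomm 1 x.
Proof. by exists 1; rewrite mulr1 mul1r scale1r. Qed.

Lemma scommMr x y z : scomm x y -> scomm x z -> scomm x (y * z).
Proof.
move=> [c e1] [c' e2]; exists (c * c').
by rewrite (mulrA x y z) e1 -scalerAl -(mulrA y x z) e2 -scalerAr scalerA mulrA.
Qed.

Lemma scommMl x y z : scomm x z -> scomm y z -> scomm (x * y) z.
Proof.
move=> [c e1] [c' e2]; exists (c' * c).
by rewrite -(mulrA x y z) e2 -scalerAr (mulrA x z y) e1 -scalerAl scalerA mulrA.
Qed.

Lemma scommXr x y n : scomm x y -> scomm x (y ^+ n).
Proof. by move=> h; elim: n => [|n IH]; [apply: scomm1 | rewrite exprS; apply: scommMr]. Qed.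

Lemma scommXl x y n : scomm x y -> scomm (x ^+ n) y.
Proof. by move=> h; elim: n => [|n IH]; [apply: scomm1l | rewrite exprS; apply: scommMl]. Qed.

End ScalarCommutation.

Section FilteredDga.
Variables (k : fieldType) (A : algType k) (D : cdga_data A).
Local Notation N := (ngen D).
Local Notation v := (gen D).
Local Notation expo := (expo D).
Local Notation mono := (@mono k A D).
Local Notation inspan := (@inspan k A D).

Lemma inspan0 (P : pred expo) : inspan P 0.
Proof. by exists [::], (fun _ => 0); rewrite big_nil. Qed.

Lemma inspan_lin (P : pred expo) (c : k) a b :
  inspan P a -> inspan P b -> inspan P (c *: a + b).
Proof.
case=> s1 [c1 [h1 ->]] [s2 [c2 [h2 ->]]].
pose u := undup (s1 ++ s2).
have uu : uniq u by apply: undup_uniq.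
have su : {subset s1 <= u} by move=> j js; rewrite mem_undup mem_cat js.
have tu : {subset s2 <= u} by move=> j js; rewrite mem_undup mem_cat js orbT.
exists u, (fun e => c * (c1 e *+ count_mem e s1) + c2 e *+ count_mem e s2); split.
  by apply/allP => e; rewrite mem_undup mem_cat => /orP [] he; [apply: (allP h1) | apply: (allP h2)].
rewrite (sum_count _ uu su) (sum_count _ uu tu) scaler_sumr -big_split /=.
by apply: eq_bigr => e _; rewrite !scalerMnl scalerA scalerDl.
Qed.

Lemma inspan_add (P : pred expo) a b : inspan P a -> inspan P b -> inspan P (a + b).
Proof. by move=> ha hb; rewrite -[a]scale1r; apply: inspan_lin. Qed.

Lemma inspan_scale (P : pred expo) (c : k) a : inspan P a -> inspan P (c *: a).
Proof. by move=> ha; rewrite -[_ *: _]addr0; apply: inspan_lin => //; apply: inspan0. Qed.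

Lemma inspan_sum (P : pred expo) (J : eqType) (s : seq J) (Q : pred J) (F : J -> A) :
  (forall j, j \in s -> Q j -> inspan P (F j)) -> inspan P (\sum_(j <- s | Q j) F j).
Proof.
move=> hF; rewrite big_seq_cond; apply: big_ind; first exact: inspan0.
  by move=> x y; apply: inspan_add.
by move=> j /andP [] /hF.
Qed.

Lemma inspan_mono (P : pred expo) e : P e -> inspan P (mono e).
Proof.
by move=> he; exists [:: e], (fun _ => 1); rewrite /= he big_seq1 scale1r.
Qed.

Lemma inspan_imp (P Q : pred expo) a :
  (forall e, P e -> Q e) -> inspan P a -> inspan Q a.
Proof.
by move=> hPQ [s [c [hs ->]]]; exists s, c; split => //; apply/allP => e /(allP hs) /hPQ.
Qed.

Lemma Wf0 m n : Wf D m n 0.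
Proof. exact: inspan0. Qed.

Lemma Wf_add m n a b : Wf D m n a -> Wf D m n b -> Wf D m n (a + b).
Proof. exact: inspan_add. Qed.

Lemma Wf_scale m n c a : Wf D m n a -> Wf D m n (c *: a).
Proof. exact: inspan_scale. Qed.

Lemma Wf_sub m n a b : Wf D m n a -> Wf D m n b -> Wf D m n (a - b).
Proof. by move=> ha hb; apply: Wf_add => //; rewrite -scaleN1r; apply: Wf_scale. Qed.

Lemma Wf_sum m n (J : eqType) (s : seq J) (Q : pred J) (F : J -> A) :
  (forall j, j \in s -> Q j -> Wf D m n (F j)) -> Wf D m n (\sum_(j <- s | Q j) F j).
Proof. exact: inspan_sum. Qed.

Lemma Wf_mono m m' n a : m <= m' -> Wf D m n a -> Wf D m' n a.
Proof. by move=> hm; apply: inspan_imp => e /and3P [-> -> h3]; rewrite (le_trans h3 hm). Qed.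

Lemma Wf_eq m m' n n' a : m = m' -> n = n' -> Wf D m n a -> Wf D m' n' a.
Proof. by move=> -> ->. Qed.

Lemma Wf_hom m n a : Wf D m n a -> Defs.hom D n a.
Proof. by apply: inspan_imp => e /and3P [-> -> _]. Qed.

Definition eadd (e f : expo) : expo := [ffun i => e i + f i].

Lemma mdeg_add (e f : expo) : mdeg (eadd e f) = mdeg e + mdeg f.
Proof.
by rewrite /mdeg -PoszD -big_split /=; congr Posz; apply: eq_bigr => i _; rewrite ffunE mulnDl.
Qed.

Lemma mwt_add (e f : expo) : mwt (eadd e f) = mwt e + mwt f.
Proof. by rewrite /mwt -big_split /=; apply: eq_bigr => i _; rewrite ffunE PoszD mulrDl. Qed.

Definition mono_seq (s : seq 'I_N) (e : 'I_N -> nat) : A := \prod_(i <- s) v i ^+ e i.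

Lemma mono_seqE (e : expo) : mono e = mono_seq (index_enum 'I_N) e.
Proof. by []. Qed.

Hypothesis freeD : free_gc D.

Lemma scomm_mono_gen s e j b : scomm (mono_seq s e) (v j ^+ b).
Proof.
elim: s => [|i s IH]; first by rewrite /mono_seq big_nil; apply: scomm1l.
rewrite /mono_seq big_cons; apply: scommMl => //; apply: scommXl; apply: scommXr.
by case: freeD => hc _ _; exists ((-1) ^+ (gdeg D i * gdeg D j)); apply: hc.
Qed.

Lemma mono_seq_mul s e f : exists c : k,
  mono_seq s e * mono_seq s f = c *: mono_seq s (fun i => e i + f i).
Proof.
elim: s => [|j s [c E]]; first by exists 1; rewrite /mono_seq !big_nil mulr1 scale1r.
have [c' E'] := scomm_mono_gen s e j (f j); exists (c * c').
rewrite /mono_seq !big_cons -!/(mono_seq s _) -mulrA (mulrA (mono_seq s e)) E'.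
rewrite -scalerAl -scalerAr -(mulrA (v j ^+ f j)) E -!scalerAr scalerA mulrA -exprD.
by rewrite mulrC.
Qed.

Lemma mono_mul (e f : expo) : exists c : k, mono e * mono f = c *: mono (eadd e f).
Proof.
have [c E] := mono_seq_mul (index_enum 'I_N) e f; exists c.
by rewrite !mono_seqE E; congr (_ *: _); apply: eq_bigr => i _; rewrite ffunE.
Qed.

Hypothesis char0 : [pchar k] =i pred0.

(* In characteristic 0 odd generators square to zero, so non-admissible monomials vanish. *)
Lemma sq_odd0 i : odd (gdeg D i) -> v i * v i = 0.
Proof.
case: freeD => hc _ _ oi; have := hc i i; rewrite -signr_odd oddM oi /= expr1 scaleN1r => e.
have : (2%:R : k) *: (v i * v i) = 0 by rewrite scaler_nat mulr2n {1}e addNr.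
by move/eqP; rewrite scaler_eq0 (pcharf0P _).1 // => /eqP.
Qed.

Lemma mono_nadm (e : expo) : ~~ adm e -> mono e = 0.
Proof.
rewrite /adm => /forallPn [i]; rewrite negb_imply -ltnNge => /andP [oi ei].
apply: (prod_seq0 (i := i)); first exact: mem_index_enum.
by rewrite -(subnK ei) exprD expr2 sq_odd0 // mulr0.
Qed.

Lemma inspan_mul (P1 P2 P3 : pred expo) a b :
  (forall e f, P1 e -> P2 f -> adm (eadd e f) -> P3 (eadd e f)) ->
  inspan P1 a -> inspan P2 b -> inspan P3 (a * b).
Proof.
move=> hP [s [c [hs ->]]] [t [c' [ht ->]]].
rewrite mulr_suml; apply: inspan_sum => e es _; rewrite mulr_sumr.
apply: inspan_sum => f ft _; rewrite -scalerAl -scalerAr scalerA; apply: inspan_scale.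
have [c2 ->] := mono_mul e f; apply: inspan_scale.
case ha : (adm (eadd e f)); last by rewrite mono_nadm ?ha //; apply: inspan0.
by apply: inspan_mono; apply: hP => //; [apply: (allP hs) | apply: (allP ht)].
Qed.

Lemma Wf_mul m n m' n' a b :
  Wf D m n a -> Wf D m' n' b -> Wf D (m + m') (n + n') (a * b).
Proof.
apply: inspan_mul => e f /and3P [_ /eqP he we] /and3P [_ /eqP hf wf] ->.
by rewrite mdeg_add mwt_add he hf eqxx lerD.
Qed.

Lemma gen_Wf j : Wf D (gwt D j) (gdeg D j)%:Z (v j).
Proof.
pose dj : expo := [ffun i => nat_of_bool (i == j)].
have -> : v j = mono dj.
  rewrite mono_seqE /mono_seq (prod_seq1 (j := j)) ?index_enum_uniq ?mem_index_enum //.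
    by rewrite ffunE eqxx expr1.
  by move=> i nij; rewrite ffunE (negbTE nij) expr0.
apply: inspan_mono; apply/and3P; split.
- by apply/forallP => i; apply/implyP => _; rewrite ffunE leq_b1.
- rewrite /mdeg (bigD1 j) //= big1 ?ffunE ?eqxx ?mul1n ?addn0 //.
  by move=> i nij; rewrite ffunE (negbTE nij).
- rewrite /mwt (bigD1 j) //= big1 ?ffunE ?eqxx ?mul1r ?addr0 //.
  by move=> i nij; rewrite ffunE (negbTE nij) mul0r.
Qed.

Lemma one_Wf : Wf D 0 0 1.
Proof.
pose z : expo := [ffun => 0%N].
have -> : (1 : A) = mono z by rewrite /Defs.mono big1 // => i _; rewrite ffunE expr0.
apply: inspan_mono; apply/and3P; split.
- by apply/forallP => i; apply/implyP => _; rewrite ffunE.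
- by rewrite /mdeg big1 // => i _; rewrite ffunE.
- by rewrite /mwt big1 // => i _; rewrite ffunE mul0r.
Qed.

Lemma graded_decomp (a : A) : exists (t : seq int) (y : int -> A) (m : int),
  [/\ uniq t, forall n, n \in t -> Wf D m n (y n) & a = \sum_(n <- t) y n].
Proof.
case: freeD => _ _ hs; have [s [c [hadm ->]]] := hs a.
exists (undup (map (@mdeg _ _ D) s)), (fun n => \sum_(e <- s | mdeg e == n) c e *: mono e),
  (\sum_(e <- s) `|mwt e|); split; first exact: undup_uniq.
- move=> n _; apply: inspan_sum => e es /eqP he.
  apply: inspan_scale; apply: inspan_mono; rewrite (allP hadm) //= he eqxx /=.
  apply: le_trans (ler_norm _) _; rewrite (big_rem e) //= lerDl.
  by apply: sumr_ge0 => i _; exact: normr_ge0.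
- by rewrite sum_fibres ?undup_uniq // => l ls; rewrite mem_undup map_f.
Qed.

Lemma inspan_common (J : eqType) (t : seq J) (P : J -> pred expo) (y : J -> A) :
  (forall n, n \in t -> inspan (P n) (y n)) ->
  exists (U : seq expo) (c : J -> expo -> k),
  [/\ uniq U, all (fun e => has (fun n => P n e) t) U &
      forall n, n \in t -> y n = \sum_(e <- U) c n e *: mono e /\
                           forall e, c n e != 0 -> P n e].
Proof.
elim: t => [_ | n t IH hy]; first by exists [::], (fun _ _ => 0).
have [|U [c [uU PU hU]]] := IH; first by move=> m mt; apply: hy; rewrite in_cons mt orbT.
have [s [cn [Ps eyn]]] := hy n (mem_head _ _).
pose U' := undup (U ++ s).
have uU' : uniq U' by apply: undup_uniq.
have UU' : {subset U <= U'} by move=> e he; rewrite mem_undup mem_cat he.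
have sU' : {subset s <= U'} by move=> e he; rewrite mem_undup mem_cat he orbT.
exists U', (fun m e => if m == n then cn e *+ count_mem e s else c m e *+ (e \in U)).
split => //.
  apply/allP => e; rewrite mem_undup mem_cat /= => /orP [eU | es].
    by apply/orP; right; apply: (allP PU).
  by rewrite (allP Ps).
move=> m; rewrite in_cons; case: (eqVneq m n) => [-> _ | nmn /= mt].
  split; first by rewrite eyn (sum_count _ uU' sU'); apply: eq_bigr => e _; rewrite scalerMnl.
  move=> e; case: (boolP (e \in s)) => [es _ | /count_memPn -> ]; last by rewrite mulr0n eqxx.
  exact: (allP Ps).
have [-> hc] := hU m mt; split.
  rewrite (sum_count _ uU' UU'); apply: eq_bigr => e _.
  by rewrite count_uniq_mem // scalerMnl.
by move=> e; case: (e \in U); rewrite ?mulr1n ?mulr0n ?eqxx //; apply: hc.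
Qed.

Lemma graded_indep (t : seq int) (y : int -> A) : uniq t ->
  (forall n, n \in t -> Defs.hom D n (y n)) -> \sum_(n <- t) y n = 0 ->
  forall n, n \in t -> y n = 0.
Proof.
move=> ut hy hsum; have [U [c [uU PU hU]]] := inspan_common hy.
pose K e := \sum_(n <- t) c n e.
have K0 : forall e, e \in U -> K e = 0.
  case: freeD => _ hind _; apply: (hind U K uU).
    by apply/allP => e /(allP PU) /hasP [n _ /andP []].
  rewrite -[RHS]hsum (eq_big_seq _ (fun n nt => (hU n nt).1)) exchange_big /=.
  by apply: eq_bigr => e _; rewrite scaler_suml.
move=> n0 n0t; rewrite (hU n0 n0t).1 big1_seq // => e /andP [_ eU].
case: (eqVneq (c n0 e) 0) => [-> | cne]; first by rewrite scale0r.
have /andP [_ /eqP de] := (hU n0 n0t).2 e cne.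
(* no other degree m contributes to the coefficient K e *)
have := K0 e eU; rewrite /K (bigD1_seq n0) //= big1_seq ?addr0 => [ce0 | m /andP [mn mt]].
  by rewrite ce0 eqxx in cne.
case: (eqVneq (c m e) 0) => // cm; have /andP [_ /eqP dm] := (hU m mt).2 e cm.
by rewrite -dm de eqxx in mn.
Qed.

Variable r : nat.
Hypothesis dD : diff_cof D r.
Local Notation d := (dif D).

Lemma d_lin : islin d.
Proof. by case: dD. Qed.

Lemma d1 : d 1 = 0.
Proof.
case: dD => _ hl _ _; have e := hl 0%N 1 1 (Wf_hom one_Wf).
rewrite !mulr1 expr0 scale1r mul1r in e.
by apply: (@addrI _ (d 1)); rewrite addr0 -e.
Qed.

Definition dlow (m : int) (n : nat) (x : A) : Prop :=
  Wf D m n%:Z x /\ Wf D (m - r%:Z) n.+1%:Z (d x).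

Lemma dlow_eq m m' n n' x : m = m' -> n = n' -> dlow m n x -> dlow m' n' x.
Proof. by move=> -> ->. Qed.

Lemma dlow_mul m n m' n' x y :
  dlow m n x -> dlow m' n' y -> dlow (m + m') (n + n') (x * y).
Proof.
move=> [hx dx] [hy dy]; split; first by rewrite PoszD; apply: Wf_mul.
case: dD => _ hl _ _; rewrite (hl n x y (Wf_hom hx)); apply: Wf_add.
  by apply: Wf_eq (Wf_mul dx hy); [rewrite addrAC | lia].
by apply: Wf_scale; apply: Wf_eq (Wf_mul hx dy); [rewrite addrA | lia].
Qed.

Lemma dlow1 : dlow 0 0 1.
Proof. by split; [apply: one_Wf | rewrite d1; apply: Wf0]. Qed.

Lemma dlow_gen j : dlow (gwt D j) (gdeg D j) (v j).
Proof.
case: dD => _ _ _ hg; split; first exact: gen_Wf.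
by apply: inspan_imp (hg j) => e /and4P [-> _ -> ->].
Qed.

Lemma dlow_mono_seq s (e : 'I_N -> nat) :
  dlow (\sum_(i <- s) (e i)%:Z * gwt D i) (\sum_(i <- s) e i * gdeg D i)%N (mono_seq s e).
Proof.
elim: s => [|i s IH]; first by rewrite /mono_seq !big_nil; apply: dlow1.
rewrite /mono_seq !big_cons; apply: dlow_mul IH; elim: (e i) => [|a IHa].
  by rewrite mul0r mul0n expr0; apply: dlow1.
rewrite exprS; apply: dlow_eq (dlow_mul (dlow_gen i) IHa).
  by rewrite -addn1 PoszD mulrDl mul1r addrC.
by rewrite mulSn.
Qed.

(* d maps W_m A^n to W_{m-r} A^{n+1}: this is where E_r-cofibrancy is used. *)
Lemma d_Wf m n a : Wf D m n a -> Wf D (m - r%:Z) (n + 1) (d a).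
Proof.
move=> [s [c [hs ->]]]; rewrite (lin_sum d_lin); apply: inspan_sum => e es _.
rewrite (lin_scale d_lin); apply: Wf_scale.
have /and3P [_ /eqP he hw] := allP hs e es.
apply: Wf_mono (_ : mwt e - r%:Z <= m - r%:Z) _; first by rewrite lerD2r.
by rewrite -he /mdeg; apply: Wf_eq (dlow_mono_seq _ e).2 => //; rewrite -addn1 PoszD.
Qed.

Lemma Wf_Zr p n x : Wf D p n x -> Zr D r%:Z p n x.
Proof. by move=> hx; split => //; apply: d_Wf. Qed.

Lemma Zr0 s p n : Zr D s p n 0.
Proof. by split; [apply: Wf0 | rewrite (lin0 d_lin); apply: Wf0]. Qed.

Lemma Zr_scale s p n c x : Zr D s p n x -> Zr D s p n (c *: x).
Proof. by move=> [h1 h2]; split; [apply: Wf_scale | rewrite (lin_scale d_lin); apply: Wf_scale]. Qed.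

Lemma Br0 p n : Br D r p n 0.
Proof. by exists 0, 0; rewrite (lin0 d_lin) addr0; split; [apply: Zr0 | split; [apply: Zr0 |]]. Qed.

Lemma Br_scale p n c x : Br D r p n x -> Br D r p n (c *: x).
Proof.
move=> [z1 [z2 [h1 [h2 ->]]]]; exists (c *: z1), (c *: z2).
by rewrite scalerDr (lin_scale d_lin); split; [apply: Zr_scale | split; [apply: Zr_scale |]].
Qed.

(* Since d lowers weights by r, B_r^{p,n} is exactly W_{p-1} A^n. *)
Lemma Br_Wf p n b : Br D r p n b -> Wf D (p - 1) n b.
Proof.
move=> [z1 [z2 [[h1 _] [[h2 _] ->]]]].
by apply: Wf_add h1 _; apply: Wf_eq (d_Wf h2); ring.
Qed.

Lemma Wf_Br p n b : Wf D (p - 1) n b -> Br D r p n b.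
Proof.
move=> hb; exists b, 0; rewrite (lin0 d_lin) addr0; split; last by split => //; apply: Zr0.
by split => //; apply: Wf_mono (d_Wf hb); lia.
Qed.

Lemma bigrading_EAut (al : k) : al != 0 -> EAut D r (bigrading r al).
Proof.
move=> a0; have ne z : al ^ z != 0 by rewrite expfz_neq0.
rewrite /bigrading; split.
- by move=> p n x hx; apply: Zr_scale.
- by move=> p n c x y _ _; rewrite scalerDr !scalerA mulrC subrr; apply: Br0.
- by move=> p n x hx; apply: Br_scale.
- move=> p n x _ hx; rewrite -[x]scale1r -(mulVf (ne (n * r%:Z + p))) -scalerA.
  exact: Br_scale.
split.
- move=> p n y hy; exists ((al ^ (n * r%:Z + p))^-1 *: y); split; first exact: Zr_scale.
  by rewrite scalerA divff // scale1r subrr; apply: Br0.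
- move=> p n p' n' x y _ _; rewrite -scalerAl -scalerAr scalerA -expfzDr //.
  have -> : n * r%:Z + p + (n' * r%:Z + p') = (n + n') * r%:Z + (p + p') by ring.
  by rewrite subrr; apply: Br0.
- by rewrite mul0r add0r expr0z scale1r subrr; apply: Br0.
- move=> p n x _; rewrite (lin_scale d_lin).
  have -> : (n + 1) * r%:Z + (p - r%:Z) = n * r%:Z + p by ring.
  by rewrite subrr; apply: Br0.
Qed.

Lemma surjective_bigrading_lift : Er_surjective D r -> bigrading_lift D r.
Proof.
move=> hs; have [h0 h1] := two_nonroot char0.
by exists 2%:R; split => //; apply: hs; apply: bigrading_EAut.
Qed.

Section BigradingLift.
Hypothesis regD : regularW D.
Variables (al : k) (Phi : A -> A).
Hypotheses (al0 : al != 0) (al_nonroot : forall m : nat, (0 < m)%N -> al ^+ m != 1).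
Hypotheses (PhiW : WAut D Phi) (Phi_ind : induces D r Phi (bigrading r al)).

(* the eigenvalue of the bigrading on E_r^{-p,n+p} *)
Definition lam (n p : int) : k := al ^ (n * r%:Z + p).

Lemma lam_inj n p p' : lam n p = lam n p' -> p = p'.
Proof. by move/(expfz_inj al0 al_nonroot)/addrI. Qed.

Lemma Phi_lin : islin Phi.
Proof. by case: PhiW. Qed.

Lemma Phi_approx p n x : Wf D p n x -> Wf D (p - 1) n (Phi x - lam n p *: x).
Proof.
move=> hx; have [z1 [z2 [[h1 _] [[h2 _] ->]]]] := Phi_ind (Wf_Zr hx).
by apply: Wf_add h1 _; apply: Wf_eq (d_Wf h2); ring.
Qed.

Definition eigen_decomp (m n : int) (x : A) (s : seq int) (xs : int -> A) : Prop :=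
  (forall p, p \in s -> [/\ p <= m, Wf D p n (xs p) & Phi (xs p) = lam n p *: xs p])
  /\ x = \sum_(p <- s) xs p.

(* Decomposing the error term Phi x - lam n m x (one level lower) decomposes x. *)
Lemma eigen_decomp_step m n x s ys : Wf D m n x ->
  eigen_decomp (m - 1) n (Phi x - lam n m *: x) s ys -> exists s' xs', eigen_decomp m n x s' xs'.
Proof.
move=> hx [hys ey].
have s_lt p : p \in s -> p < m by move=> /hys [hp _ _]; lia.
have neq p : p \in s -> lam n p - lam n m != 0.
  by move=> ps; rewrite subr_eq0; apply: contraTneq (s_lt p ps) => /lam_inj ->; rewrite ltxx.
(* the eigenvector components of x for the eigenvalues lam n p, p < m *)
pose xs' p := (lam n p - lam n m)^-1 *: ys p.
pose xm := x - \sum_(p <- s) xs' p.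
have sne p : p \in s -> (p == m) = false by move=> /s_lt; rewrite lt_neqAle => /andP [/negbTE].
exists (m :: s), (fun p => if p == m then xm else xs' p); split; last first.
  by rewrite big_cons eqxx (eq_big_seq xs') ?subrK // => p ps; rewrite sne.
move=> p; rewrite in_cons => /orP [/eqP -> | ps]; last first.
  rewrite sne //; have [hp h2 h3] := hys p ps; split; [lia | exact: Wf_scale |].
  by rewrite /xs' (lin_scale Phi_lin) h3 !scalerA mulrC.
rewrite eqxx; split => //.
  apply: Wf_sub hx _; apply: Wf_sum => j js _; have [hp h2 _] := hys j js.
  by apply: Wf_scale; apply: Wf_mono h2; lia.
have E1 : \sum_(j <- s) Phi (xs' j) = \sum_(j <- s) (lam n m *: xs' j + ys j).
  apply: eq_big_seq => j js; have [_ _ h3] := hys j js.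
  rewrite /xs' (lin_scale Phi_lin) h3 !scalerA -[X in _ = _ + X]scale1r -scalerDl.
  by congr (_ *: _); field; apply: neq.
rewrite /xm (lin_sub Phi_lin) (lin_sum Phi_lin) E1 big_split /= -scaler_sumr -ey.
by rewrite scalerBr opprD opprB addrCA [Phi x + _]addrC subrK addrC.
Qed.

(* By regularity, every element of W_m A^n is a sum of such eigenvectors. *)
Lemma eigen_decomp_exists m n x : Wf D m n x -> exists s xs, eigen_decomp m n x s xs.
Proof.
have [q hq] := regD n; have [K hK] : exists K : nat, m <= q + K%:Z by exists `|m - q|%N; lia.
elim: K m x hK => [|K IH] m x hm hx.
  exists [::], (fun _ => 0); split => //; rewrite big_nil; apply: hq.
  by apply: Wf_mono hx; rewrite addr0 in hm.
have [|s [ys hys]] := IH (m - 1) _ _ (Phi_approx hx); first by move: hm; lia.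
exact: eigen_decomp_step hx hys.
Qed.

(* the candidate splitting: A^{P,Q} is the lam-eigenspace in W_{-P} A^{P+Q} *)
Definition eigenpiece (P Q : int) (a : A) : Prop :=
  Wf D (- P) (P + Q) a /\ Phi a = al ^ ((P + Q) * r%:Z + - P) *: a.

Lemma eigenpieceE p n z :
  eigenpiece (- p) (n + p) z <-> Wf D p n z /\ Phi z = lam n p *: z.
Proof. by rewrite /eigenpiece opprK (_ : - p + (n + p) = n) //; ring. Qed.

Lemma eigenpiece_span a : exists (s : seq (int * int)) (x : int * int -> A),
  (forall i, i \in s -> eigenpiece i.1 i.2 (x i)) /\ a = \sum_(i <- s) x i.
Proof.
have [t [y [m [ut hy ey]]]] := graded_decomp a.
have [dn hdn] : exists dn : int -> seq int * (int -> A),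
    forall n, n \in t -> eigen_decomp m n (y n) (dn n).1 (dn n).2.
  apply: (ClassicalEpsilon.choice (fun n p => n \in t -> eigen_decomp m n (y n) p.1 p.2)) => n.
  case: (boolP (n \in t)) => nt; last by exists ([::], fun _ => 0).
  by have [s [xs h]] := eigen_decomp_exists (hy n nt); exists (s, xs).
exists (flatten [seq [seq (- p, n + p) | p <- (dn n).1] | n <- t]),
  (fun i => (dn (i.1 + i.2)).2 (- i.1)); split.
  move=> i /flatten_mapP [n nt /mapP [p ps ->]] /=.
  rewrite opprK (_ : - p + (n + p) = n); last by ring.
  by apply/eigenpieceE; have [/(_ p ps) [_ h2 h3] _] := hdn n nt.
rewrite big_flatten /= big_map ey; apply: eq_big_seq => n nt.
rewrite big_map; have [_ ->] := hdn n nt; apply: eq_bigr => p _ /=.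
by rewrite opprK (_ : - p + (n + p) = n) //; ring.
Qed.

(* Eigenpieces of distinct bidegrees are independent: split first by the total degree,
   then by the eigenvalue, which determines the weight. *)
Lemma eigenpiece_indep (s : seq (int * int)) (x : int * int -> A) : uniq s ->
  (forall i, i \in s -> eigenpiece i.1 i.2 (x i)) -> \sum_(i <- s) x i = 0 ->
  forall i, i \in s -> x i = 0.
Proof.
move=> us hx hs i0 i0s.
pose deg (i : int * int) := i.1 + i.2.
pose s0 := filter (fun i => deg i == deg i0) s.
have z : \sum_(i <- s0) x i = 0.
  rewrite big_filter.
  apply: (graded_indep (t := undup (map deg s)) (y := fun n => \sum_(i <- s | deg i == n) x i));
    rewrite ?undup_uniq ?mem_undup ?map_f //.
    by move=> n _; apply: inspan_sum => i iins /eqP <-; apply: Wf_hom (hx i iins).1.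
  by rewrite sum_fibres ?undup_uniq // => l ls; rewrite mem_undup map_f.
apply: (eigenvectors_indep Phi_lin (mu := fun i => lam (deg i0) (- i.1)) (filter_uniq _ us) _ _ z);
  last by rewrite mem_filter eqxx.
- move=> [a b] [c d]; rewrite !mem_filter /deg /= => /andP [/eqP e1 _] /andP [/eqP e2 _].
  move/lam_inj/eqP; rewrite eqr_opp => /eqP ec; subst c; congr pair.
  by apply: (@addrI _ a); rewrite e1 e2.
- move=> i; rewrite mem_filter => /andP [/eqP e iins]; have [_ ->] := hx i iins.
  by rewrite -/(deg i) e.
Qed.

Lemma eigenpiece_splitting : r_splitting D r.
Proof.
have [hl [hm hone] hdc _ hWf] := PhiW.
exists eigenpiece; split.
- move=> P Q; split; first by split; [apply: Wf0 | rewrite (lin0 hl) scaler0].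
  move=> c x y [hx ex] [hy ey]; split; first by apply: Wf_add => //; apply: Wf_scale.
  by rewrite hl ex ey scalerDr !scalerA mulrC.
- exact: eigenpiece_span.
- exact: eigenpiece_indep.
- move=> P Q x [hx ex]; split; first by apply: Wf_eq (d_Wf hx); ring.
  by rewrite hdc ex (lin_scale d_lin); congr (_ ^ _ *: _); ring.
split.
- move=> P Q P' Q' x y [hx ex] [hy ey]; split; first by apply: Wf_eq (Wf_mul hx hy); ring.
  rewrite hm ex ey -scalerAl -scalerAr scalerA -expfzDr //; congr (_ ^ _ *: _); ring.
- move=> m n a; split.
    move=> ha; have [s [xs [hs ->]]] := eigen_decomp_exists ha.
    exists s, xs; split => // p ps; have [h1 h2 h3] := hs p ps.
    by split => //; apply/eigenpieceE.
  move=> [s [xs [hs ->]]]; apply: Wf_sum => p ps _.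
  by have [hp /eigenpieceE [h2 _]] := hs p ps; apply: Wf_mono hp h2.
Qed.

End BigradingLift.

Lemma bigrading_lift_splitting : regularW D -> bigrading_lift D r -> r_splitting D r.
Proof. by move=> regD [al [a0 nr [Phi [hW hi]]]]; apply: (eigenpiece_splitting regD a0 nr hW hi). Qed.

Definition piece (S : int -> int -> A -> Prop) (i : int * int) : A -> Prop := S i.1 i.2.

Definition is_splitting (S : int -> int -> A -> Prop) : Prop :=
  [/\ (forall p q, S p q 0 /\ forall (c : k) x y, S p q x -> S p q y -> S p q (c *: x + y)),
      (forall a, exists (s : seq (int * int)) (x : int * int -> A),
          (forall i, i \in s -> S i.1 i.2 (x i)) /\ a = \sum_(i <- s) x i),
      (forall (s : seq (int * int)) (x : int * int -> A), uniq s ->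
          (forall i, i \in s -> S i.1 i.2 (x i)) -> \sum_(i <- s) x i = 0 ->
          forall i, i \in s -> x i = 0),
      (forall p q x, S p q x -> S (p + r%:Z) (q - r%:Z + 1) (d x)) &
      [/\ (forall p q p' q' x y, S p q x -> S p' q' y -> S (p + p') (q + q') (x * y)) &
          (forall m n a, Wf D m n a <-> exists (s : seq int) (x : int -> A),
              (forall p, p \in s -> p <= m /\ S (- p) (n + p) (x p)) /\ a = \sum_(p <- s) x p)]].

Section Splitting.
Variable S : int -> int -> A -> Prop.
Hypothesis splitS : is_splitting S.

Local Notation comp i a := (proj (piece S) i a).
Local Notation wt i := (- i.1).
Local Notation dg i := (i.1 + i.2).

Lemma splitting_direct_sum : direct_sum (piece S).
Proof. by case: splitS => h1 h2 h3 _ _; split; [move=> i; exact: h1 | exact: h2 | exact: h3]. Qed.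

Lemma comp_piece i a : piece S i (comp i a).
Proof. exact: proj_in splitting_direct_sum i a. Qed.

Definition below (m n : int) (i : int * int) : bool := (dg i == n) && (wt i <= m).

Lemma comp_Wf0 m n a i : Wf D m n a -> ~~ below m n i -> comp i a = 0.
Proof.
case: splitS => _ _ _ _ [_ hW] /hW [s [x [hs ->]]] ni.
pose t := map (fun p => (- p, n + p)) s.
have hdec : is_decomp (piece S) (\sum_(p <- s) x p) t (fun j => x (- j.1)).
  split; last by rewrite big_map; apply: eq_bigr => p _ /=; rewrite opprK.
  by move=> j /mapP [p ps ->]; rewrite /piece /= opprK; exact: (hs p ps).2.
apply: (proj_supp splitting_direct_sum hdec); apply/negP => /mapP [p ps ei].
move: ni; rewrite ei /below /= opprK (hs p ps).1 andbT.
by rewrite (_ : - p + (n + p) = n) ?eqxx //; ring.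
Qed.

Lemma Wf_comps m n a : (forall i, ~~ below m n i -> comp i a = 0) -> Wf D m n a.
Proof.
case: (splitS) => _ _ _ _ [_ hW] h.
have ea' : a = \sum_(i <- filter (below m n) (supp (piece S) a)) comp i a.
  rewrite big_filter big_mkcond /= {1}(recon splitting_direct_sum a); apply: eq_bigr => i _.
  by case: (boolP (below m n i)) => // /h.
apply/hW; exists (map (fun i => - i.1) (filter (below m n) (supp (piece S) a))),
  (fun p => comp (- p, n + p) a); split.
  move=> p /mapP [i]; rewrite mem_filter => /andP [/andP [/eqP hn hm] _] ->.
  by split => //; exact: (comp_piece (_, _) a).
rewrite big_map {1}ea'; apply: eq_big_seq => i; rewrite mem_filter => /andP [/andP [/eqP hn _] _].
rewrite opprK; congr (proj _ _ a); case: i hn => a1 a2 /= <-.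
by congr pair; ring.
Qed.

Lemma piece_Wf i x : piece S i x -> Wf D (wt i) (dg i) x.
Proof.
move=> hx; apply: Wf_comps => j nj; rewrite (proj_self splitting_direct_sum j hx).
by case: (eqVneq j i) => [e | //]; move: nj; rewrite e /below eqxx lexx.
Qed.

Lemma comp_low0 i m n z : Wf D m n z -> m < wt i -> comp i z = 0.
Proof. by move=> hz hm; apply: (comp_Wf0 hz); rewrite /below negb_and -ltNge hm orbT. Qed.

Lemma comp_top i z : Wf D (wt i) (dg i) z -> Wf D (wt i - 1) (dg i) (z - comp i z).
Proof.
move=> hz; apply: Wf_comps => j nj; rewrite (proj_sub splitting_direct_sum).
rewrite (proj_self splitting_direct_sum j (comp_piece i z)).
case: (eqVneq j i) => [-> | nji]; first by rewrite subrr.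
rewrite subr0; apply: (comp_Wf0 hz); apply: contra nj; rewrite /below => /andP [e1 e2].
rewrite e1 /=; rewrite le_eqVlt in e2; case/orP: e2 => [/eqP e2 | e2]; last by rewrite -ltzD1 subrK.
move/eqP: e1 => e1; case: i j e2 e1 nji {hz} => [i1 i2] [j1 j2] /= e2 e1.
have ej : j1 = i1 by lia.
by subst j1; rewrite (_ : j2 = i2) ?eqxx //; lia.
Qed.

Lemma comp_eq_mod i a b : Wf D (wt i - 1) (dg i) (a - b) -> comp i a = comp i b.
Proof.
move=> h; have lt : wt i - 1 < wt i by lia.
by have /eqP := comp_low0 h lt; rewrite (proj_sub splitting_direct_sum) subr_eq0 => /eqP.
Qed.

Lemma comp_eq_Br i a b : Br D r (wt i) (dg i) (a - b) -> comp i a = comp i b.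
Proof. by move/Br_Wf; apply: comp_eq_mod. Qed.

Lemma piece_Zr i x : piece S i x -> Zr D r%:Z (wt i) (dg i) x.
Proof. by move/piece_Wf/Wf_Zr. Qed.

Lemma piece_mul i j x y :
  piece S i x -> piece S j y -> piece S (i.1 + j.1, i.2 + j.2) (x * y).
Proof. by case: splitS => _ _ _ _ [hm _]; apply: hm. Qed.

(* The unit lies in A^{0,0}: the (0,0)-component of 1 is a left unit on every piece. *)
Lemma one_piece : piece S (0, 0) 1.
Proof.
pose u := comp (0, 0) 1.
have u_left j y : piece S j y -> u * y = y.
  move=> hy; rewrite -[RHS](proj_id splitting_direct_sum hy) -[in RHS](mul1r y).
  rewrite [in RHS](recon splitting_direct_sum 1) [in RHS]mulr_suml (lin_sum (proj_lin splitting_direct_sum j)).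
  have term i : comp j (comp i 1 * y) = if i == (0, 0) then u * y else 0.
    rewrite (proj_self splitting_direct_sum j (piece_mul (comp_piece i 1) hy)).
    case: (eqVneq i (0, 0)) => [-> | nz]; first by rewrite /= !add0r -surjective_pairing eqxx.
    case: eqP => // e; case/eqP: nz; have e1 := congr1 fst e; have e2 := congr1 snd e.
    by case: i e1 e2 {e} => i1 i2 /= e1 e2; congr pair; lia.
  rewrite (eq_bigr _ (fun i _ => term i)) -big_mkcond /= sum_pred1_seq ?supp_uniq //.
  by case: ifP => // /negbT /(proj_notin_supp splitting_direct_sum) u0; rewrite /u u0 mul0r.
have u1 : u = 1.
  have : u * \sum_(i <- supp (piece S) 1) comp i 1 = \sum_(i <- supp (piece S) 1) comp i 1.
    by rewrite mulr_sumr; apply: eq_bigr => i _; apply: u_left (comp_piece i 1).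
  by rewrite -(recon splitting_direct_sum 1) mulr1.
by rewrite -u1; apply: comp_piece.
Qed.

Section Lift.
Variable G : int -> int -> A -> A.
Hypothesis autG : EAut D r G.

Definition Gc (i : int * int) (y : A) : A := comp i (G (wt i) (dg i) y).

Definition PhiG (a : A) : A := \sum_(i <- supp (piece S) a) Gc i (comp i a).

Lemma Gc_piece i y : piece S i (Gc i y).
Proof. exact: comp_piece. Qed.

Lemma Gc_eq i z w : piece S i w -> Wf D (wt i - 1) (dg i) (G (wt i) (dg i) z - w) -> Gc i z = w.
Proof. by move=> hw /comp_eq_mod; rewrite /Gc (proj_id splitting_direct_sum hw). Qed.

Lemma G_top i x : piece S i x ->
  Wf D (wt i) (dg i) (G (wt i) (dg i) x) /\ Wf D (wt i - 1) (dg i) (G (wt i) (dg i) x - Gc i x).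
Proof.
case: autG => hZ _ _ _ _ hx; have [hg _] := hZ _ _ _ (piece_Zr hx).
by split => //; apply: comp_top.
Qed.

Lemma Gc0 i : Gc i 0 = 0.
Proof.
case: autG => _ _ hB _ _; have := comp_eq_Br (i := i) (a := G (wt i) (dg i) 0) (b := 0).
by rewrite /Gc subr0 (proj0 splitting_direct_sum) => -> //; apply: hB; apply: Br0.
Qed.

Lemma Gc_comp i x : Wf D (wt i) (dg i) x -> Gc i (comp i x) = comp i (G (wt i) (dg i) x).
Proof.
case: autG => _ hl hB _ _ hx; rewrite /Gc; symmetry; apply: comp_eq_mod.
set y := comp i x; have hw := comp_top hx; set w := x - y in hw.
have Zw : Zr D r%:Z (wt i) (dg i) w by apply: Wf_Zr; apply: Wf_mono hw; lia.
have B1 := Br_Wf (hl _ _ 1 y w (piece_Zr (comp_piece i x)) Zw).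
have B2 := Br_Wf (hB _ _ w (Wf_Br hw)).
by have := Wf_add B1 B2; rewrite !scale1r /w [y + _]addrC subrK opprD addrA subrK.
Qed.

Lemma Gc_lin i c y z : piece S i y -> piece S i z -> Gc i (c *: y + z) = c *: Gc i y + Gc i z.
Proof.
case: autG => _ hl _ _ _ hy hz; rewrite /Gc -(proj_lin splitting_direct_sum); apply: comp_eq_Br.
exact: hl (piece_Zr hy) (piece_Zr hz).
Qed.

Lemma PhiG_list a u : uniq u -> (forall i, i \notin u -> comp i a = 0) ->
  PhiG a = \sum_(i <- u) Gc i (comp i a).
Proof.
move=> uu hu; rewrite /PhiG; pose w := undup (supp (piece S) a ++ u).
have zero i : comp i a = 0 -> Gc i (comp i a) = 0 by move->; apply: Gc0.
rewrite (@sum_extend _ _ _ w) ?supp_uniq ?undup_uniq //; last 2 first.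
- by move=> i hi; rewrite mem_undup mem_cat hi.
- by move=> i _ hi; apply: zero; apply: proj_notin_supp splitting_direct_sum _ _ hi.
rewrite [RHS](@sum_extend _ _ u w) ?undup_uniq //.
- by move=> i hi; rewrite mem_undup mem_cat hi orbT.
- by move=> i _ hi; apply: zero; apply: hu.
Qed.

Lemma PhiG_piece i x : piece S i x -> PhiG x = Gc i x.
Proof.
move=> hx; rewrite (@PhiG_list x [:: i]) // ?big_seq1 ?(proj_id splitting_direct_sum hx) //.
by move=> j; rewrite inE => nj; rewrite (proj_self splitting_direct_sum j hx) (negbTE nj).
Qed.

Lemma comp_PhiG i a : comp i (PhiG a) = Gc i (comp i a).
Proof.
rewrite /PhiG (proj_sum splitting_direct_sum) ?supp_uniq //; last by move=> j _; apply: Gc_piece.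
by case: ifP => // /negbT /(proj_notin_supp splitting_direct_sum) ->; rewrite Gc0.
Qed.

Lemma PhiG_lin : islin PhiG.
Proof.
move=> c a b; pose u := undup (supp (piece S) a ++ supp (piece S) b).
have ha i : i \notin u -> comp i a = 0.
  by rewrite mem_undup mem_cat negb_or => /andP [hi _]; apply: proj_notin_supp splitting_direct_sum _ _ hi.
have hb i : i \notin u -> comp i b = 0.
  by rewrite mem_undup mem_cat negb_or => /andP [_ hi]; apply: proj_notin_supp splitting_direct_sum _ _ hi.
rewrite !(@PhiG_list _ u) ?undup_uniq //; last first.
  by move=> i hi; rewrite (proj_lin splitting_direct_sum) ha // hb // scaler0 addr0.
rewrite scaler_sumr -big_split /=; apply: eq_bigr => i _.
by rewrite (proj_lin splitting_direct_sum) Gc_lin //; apply: comp_piece.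
Qed.

(* Gc i is injective and surjective on A^i, because [G] is bijective on E_r. *)
Lemma Gc_inj i y : piece S i y -> Gc i y = 0 -> y = 0.
Proof.
case: autG => hZ _ _ hR _ hy ht; have Zy := piece_Zr hy.
have [hGy _] := hZ _ _ _ Zy; have hw := comp_top hGy; rewrite -/(Gc i y) ht subr0 in hw.
have By := Br_Wf (hR _ _ _ Zy (Wf_Br hw)).
by have := comp_low0 By (_ : wt i - 1 < wt i); rewrite (proj_id splitting_direct_sum hy); apply; lia.
Qed.

Lemma Gc_surj i y : piece S i y -> exists x, piece S i x /\ Gc i x = y.
Proof.
case: (autG) => _ _ _ _ [hsu _ _ _] hy; have [x0 [[hx0 _] hb]] := hsu _ _ _ (piece_Zr hy).
exists (comp i x0); split; first exact: comp_piece.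
by rewrite Gc_comp // -(proj_id splitting_direct_sum hy); apply: comp_eq_Br.
Qed.

Lemma PhiG_bij : bijective PhiG.
Proof.
have inj a : PhiG a = 0 -> a = 0.
  move=> ha; apply: (proj_zero splitting_direct_sum) => i; apply: (Gc_inj (comp_piece i a)).
  by rewrite -comp_PhiG ha (proj0 splitting_direct_sum).
have [g hg] : exists g, forall b, PhiG (g b) = b.
  apply: (ClassicalEpsilon.choice (fun b a => PhiG a = b)) => b.
  have [xi hxi] : exists xi, forall i, piece S i (xi i) /\ Gc i (xi i) = comp i b.
    apply: (ClassicalEpsilon.choice (fun i x => piece S i x /\ Gc i x = comp i b)) => i.
    exact: Gc_surj (comp_piece i b).
  exists (\sum_(i <- supp (piece S) b) xi i); rewrite (lin_sum PhiG_lin) [RHS](recon splitting_direct_sum b).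
  by apply: eq_bigr => i _; have [h1 h2] := hxi i; rewrite (PhiG_piece h1).
exists g => // a; apply/eqP; rewrite -subr_eq0; apply/eqP; apply: inj.
by rewrite (lin_sub PhiG_lin) hg subrr.
Qed.

Lemma PhiG_Wf m n a : Wf D m n (PhiG a) <-> Wf D m n a.
Proof.
split => hw; apply: Wf_comps => i ni.
  by apply: (Gc_inj (comp_piece i a)); rewrite -comp_PhiG; apply: (comp_Wf0 hw).
by rewrite comp_PhiG (comp_Wf0 hw ni) Gc0.
Qed.

(* PhiG is multiplicative: on pieces, G is multiplicative modulo lower weights. *)
Lemma PhiG_mul_piece i j x y : piece S i x -> piece S j y -> PhiG (x * y) = PhiG x * PhiG y.
Proof.
move=> hx hy; rewrite (PhiG_piece (piece_mul hx hy)) (PhiG_piece hx) (PhiG_piece hy).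
apply: Gc_eq; first exact: piece_mul (Gc_piece _ _) (Gc_piece _ _).
rewrite /= opprD (_ : i.1 + j.1 + (i.2 + j.2) = dg i + dg j); last by ring.
case: autG => _ _ _ _ [_ hM _ _]; have B := Br_Wf (hM _ _ _ _ x y (piece_Zr hx) (piece_Zr hy)).
have [gx wx] := G_top hx; have [gy wy] := G_top hy.
have W2 : Wf D (wt i + wt j - 1) (dg i + dg j)
    (G (wt i) (dg i) x * G (wt j) (dg j) y - Gc i x * Gc j y).
  rewrite mul_sub_mul; apply: Wf_add.
    by apply: Wf_eq (Wf_mul (piece_Wf (Gc_piece i x)) wy); ring.
  by apply: Wf_eq (Wf_mul wx gy); ring.
by have := Wf_add B W2; rewrite subrKA.
Qed.

Lemma PhiG_mul a b : PhiG (a * b) = PhiG a * PhiG b.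
Proof.
rewrite [in LHS](recon splitting_direct_sum a) [in LHS](recon splitting_direct_sum b).
rewrite [in RHS](recon splitting_direct_sum a) [in RHS](recon splitting_direct_sum b).
rewrite mulr_suml !(lin_sum PhiG_lin) mulr_suml; apply: eq_bigr => i _.
rewrite mulr_sumr (lin_sum PhiG_lin) mulr_sumr; apply: eq_bigr => j _.
exact: PhiG_mul_piece (comp_piece i a) (comp_piece j b).
Qed.

Lemma PhiG_one : PhiG 1 = 1.
Proof.
rewrite (PhiG_piece one_piece); apply: (Gc_eq (i := (0, 0)) (z := 1) one_piece).
case: autG => _ _ _ _ [_ _ hone _]; have := Br_Wf hone.
by rewrite /= oppr0 addr0.
Qed.

(* PhiG commutes with d: on pieces, G commutes with d modulo lower weights. *)
Lemma PhiG_d_piece i x : piece S i x -> PhiG (d x) = d (PhiG x).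
Proof.
case: (splitS) => _ _ _ hSd _ hx.
have hdx : piece S (i.1 + r%:Z, i.2 - r%:Z + 1) (d x) by apply: hSd.
rewrite (PhiG_piece hdx) (PhiG_piece hx); apply: Gc_eq; first by apply: hSd; apply: Gc_piece.
rewrite /= opprD (_ : i.1 + r%:Z + (i.2 - r%:Z + 1) = dg i + 1); last by ring.
case: autG => _ _ _ _ [_ _ _ hdc]; have B := Br_Wf (hdc _ _ _ (piece_Zr hx)).
have [_ wx] := G_top hx; have dw := d_Wf wx; rewrite (lin_sub d_lin) in dw.
have := Wf_add B (Wf_eq _ _ dw); rewrite subrKA; apply; ring.
Qed.

Lemma PhiG_d a : PhiG (d a) = d (PhiG a).
Proof.
rewrite [in LHS](recon splitting_direct_sum a) [in RHS](recon splitting_direct_sum a) (lin_sum d_lin).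
rewrite !(lin_sum PhiG_lin) (lin_sum d_lin); apply: eq_bigr => i _.
exact: PhiG_d_piece (comp_piece i a).
Qed.

Lemma PhiG_induces : induces D r PhiG G.
Proof.
move=> p n x [hx _]; apply: Wf_Br; case: autG => hZ _ _ _ _.
have [gx _] := hZ _ _ _ (Wf_Zr hx).
pose i := (- p, n + p); have e1 : wt i = p by rewrite /= opprK.
have e2 : dg i = n by rewrite /=; ring.
have hz : Wf D (wt i) (dg i) (PhiG x - G p n x).
  by rewrite e1 e2; apply: Wf_sub => //; apply/PhiG_Wf.
have := comp_top hz; rewrite (proj_sub splitting_direct_sum) comp_PhiG Gc_comp ?e1 ?e2 //.
by rewrite subrr subr0.
Qed.

End Lift.
End Splitting.

Lemma splitting_surjective : r_splitting D r -> Er_surjective D r.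
Proof.
move=> [S hS] G hG; exists (PhiG S G); split; last exact: PhiG_induces.
split; [exact: PhiG_lin | split; [exact: PhiG_mul | exact: PhiG_one] | exact: PhiG_d |
        exact: PhiG_bij | exact: PhiG_Wf].
Qed.

End FilteredDga.

Unset Implicit Arguments. Set Strict Implicit. Set Printing Implicit Defensive.

Theorem lemma2p17 (k : fieldType) (A : algType k) (D : cdga_data A) (r : nat) :
  [pchar k] =i pred0 ->
  fg_Er_cofibrant D r ->
  (r_splitting D r <-> Er_surjective D r) /\ (Er_surjective D r <-> bigrading_lift D r).
Proof.
move=> char0 [freeD [dD regD]].
have s12 : r_splitting D r -> Er_surjective D r by apply: splitting_surjective.
have s23 : Er_surjective D r -> bigrading_lift D r by apply: surjective_bigrading_lift.
have s31 : bigrading_lift D r -> r_splitting D r by apply: bigrading_lift_splitting.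
split; split.
- exact: s12.
- by move/s23/s31.
- exact: s23.
- by move/s31/s12.
Qed.
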